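(* Let $(V,F)$ be a near vector space with $(F,\circ)$ commutative, and let $u,v\in Q(V)\setminus\{0\}$. Suppose that for all $n\geq1$ and all $\alpha_1,\dots,\alpha_n\in F$, $$\alpha_1+_u\cdots+_u\alpha_n=0 \iff \alpha_1+_v\cdots+_v\alpha_n=0.$$ Then $+_u=+_v$. (Thus the addition $+_u$ is completely determined by which finite $+_u$-sums of elements of $F$ are zero.)
   Context: An F-group is a pair $(V,F)$ where $(V,+)$ is a group and $F$ is a set of endomorphisms of $V$ such that: the maps $0,1,-1$ lie in $F$; $F\setminus\{0\}$ is a subgroup of $\mathrm{Aut}(V,+)$ under composition; and if $\alpha x=\beta x$ with $\alpha,\beta\in F$, $x\in V$ then $\alpha=\beta$ or $x=0$. The quasi-kernel $Q(V)$ is the set of $u\in V$ such that for all $\alpha,\beta\in F$ there is $\gamma\in F$ with $\alpha u+\beta u=\gamma u$. $(V,F)$ is a near vector space if $Q(V)$ generates $(V,+)$. Commutativity means $\alpha(\beta v)=\beta(\alpha v)$ for all $\alpha,\beta\in F$, $v\in V$. For $u\in Q(V)\setminus\{0\}$, $\alpha+_u\beta$ is the unique $\gamma\in F$ with $\alpha u+\beta u=\gamma u$; $(F,+_u,\circ)$ is a field. *)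

From Stdlib Require Import List.
Import ListNotations.

Section FGroups.
Variables (V : Type) (add : V -> V -> V) (zero : V) (opp : V -> V).
Variable F : (V -> V) -> Prop.

Definition is_group : Prop :=
  (forall x y w, add x (add y w) = add (add x y) w) /\
  (forall x, add zero x = x) /\ (forall x, add x zero = x) /\
  (forall x, add (opp x) x = zero) /\ (forall x, add x (opp x) = zero).

Definition is_endo (f : V -> V) : Prop :=
  forall x y, f (add x y) = add (f x) (f y).

Definition is_zero_map (f : V -> V) : Prop := forall x, f x = zero.

Definition is_Fgroup : Prop :=
  is_group /\
  (forall f, F f -> is_endo f) /\
  F (fun _ => zero) /\ F (fun x => x) /\ F opp /\
  (* F \ {0} is a subgroup of Aut(V,+) under composition *)
  (forall a b, F a -> F b -> ~ is_zero_map a -> ~ is_zero_map b ->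
     F (fun x => a (b x))) /\
  (forall a, F a -> ~ is_zero_map a ->
     exists b, F b /\ (forall x, b (a x) = x) /\ (forall x, a (b x) = x)) /\
  (forall a b x, F a -> F b -> a x = b x -> (forall y, a y = b y) \/ x = zero).

Definition in_Q (u : V) : Prop :=
  forall a b, F a -> F b -> exists c, F c /\ add (a u) (b u) = c u.

Definition in_generated_by_Q (x : V) : Prop :=
  forall P : V -> Prop,
    (forall u, in_Q u -> P u) -> P zero ->
    (forall y w, P y -> P w -> P (add y w)) ->
    (forall y, P y -> P (opp y)) -> P x.

Definition is_near_vector_space : Prop :=
  is_Fgroup /\ forall x, in_generated_by_Q x.

Definition F_commutative : Prop :=
  forall a b x, F a -> F b -> a (b x) = b (a x).

(* plus_u u a b c  :<->  c = a +_u b, i.e. c ∈ F and a u + b u = c u *)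
Definition plus_u (u : V) (a b c : V -> V) : Prop :=
  F c /\ add (a u) (b u) = c u.

(* sum_u u l c  :<->  c = a_1 +_u (a_2 +_u ( ... +_u a_n)) for l = [a_1;...;a_n],
   n >= 1 (associativity of +_u makes the bracketing irrelevant) *)
Fixpoint sum_u (u : V) (l : list (V -> V)) (c : V -> V) : Prop :=
  match l with
  | [] => False
  | [a] => F c /\ forall y, c y = a y
  | a :: l' => exists d, sum_u u l' d /\ plus_u u a d c
  end.

Definition sum_u_is_zero (u : V) (l : list (V -> V)) : Prop :=
  exists c, sum_u u l c /\ is_zero_map c.

End FGroups.

(* The relation [a +_u b = c] is recovered from zero sums alone: since [-c] lies in [F],
   [a +_u b = c] holds exactly when the three-term sum [a +_u b +_u (-c)] vanishes.
   Evaluated at [u] this sum is [a u + b u - c u], and a map of [F] vanishing at the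
   nonzero point [u] is the zero map by fixed-point-freeness. *)
From Stdlib Require Import List Classical FunctionalExtensionality.
Import ListNotations.

Section NearVectorSpaceSums.
Variables (V : Type) (add : V -> V -> V) (zero : V) (opp : V -> V)
  (F : (V -> V) -> Prop).
Hypothesis hF : is_Fgroup V add zero opp F.

Let hgroup : is_group V add zero opp := proj1 hF.

Lemma addA x y z : add x (add y z) = add (add x y) z.
Proof. exact (proj1 hgroup x y z). Qed.

Lemma add0r x : add zero x = x.
Proof. exact (proj1 (proj2 hgroup) x). Qed.

Lemma addr0 x : add x zero = x.
Proof. exact (proj1 (proj2 (proj2 hgroup)) x). Qed.

Lemma addNr x : add (opp x) x = zero.
Proof. exact (proj1 (proj2 (proj2 (proj2 hgroup))) x). Qed.

Lemma addrN x : add x (opp x) = zero.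
Proof. exact (proj2 (proj2 (proj2 (proj2 hgroup))) x). Qed.

Lemma oppr0 : opp zero = zero.
Proof. now rewrite <- (addr0 (opp zero)), addNr. Qed.

Lemma subr0_eq x y : add x (opp y) = zero -> x = y.
Proof.
  intro E.
  now rewrite <- (addr0 x), <- (addNr y), addA, E, add0r.
Qed.

Lemma opp_not_zero_map (w : V) : w <> zero -> ~ is_zero_map V zero opp.
Proof.
  intros hw0 Zopp; apply hw0.
  now rewrite <- (add0r w), <- (Zopp w), addNr.
Qed.

(* [F] is a predicate on functions, so the zero case needs [-0 = 0] up to funext. *)
Lemma F_opp_comp (w : V) (hw0 : w <> zero) c :
  F c -> F (fun x => opp (c x)).
Proof.
  pose proof hF as [_ [_ [Fzero [_ [Fopp [Fcomp _]]]]]].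
  intro Fc.
  destruct (classic (is_zero_map V zero c)) as [Zc | NZc].
  - replace (fun x => opp (c x)) with (fun _ : V => zero); [exact Fzero|].
    apply functional_extensionality; intro x.
    now rewrite Zc, oppr0.
  - exact (Fcomp opp c Fopp Fc (opp_not_zero_map w hw0) NZc).
Qed.

Lemma F_zero_map_of_root (w : V) (hw0 : w <> zero) e :
  F e -> e w = zero -> is_zero_map V zero e.
Proof.
  pose proof hF as [_ [_ [Fzero [_ [_ [_ [_ hfpf]]]]]]].
  intros Fe ew0.
  now destruct (hfpf e (fun _ => zero) w Fe Fzero ew0).
Qed.

Lemma sum_u_three_eval (w : V) a b d e :
  sum_u V add F w [a; b; d] e ->
  F e /\ add (a w) (add (b w) (d w)) = e w.
Proof.
  intros [d1 [[d0 [[_ Ed0] [_ Ed1]]] [Fe Ee]]].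
  split; [exact Fe|].
  now rewrite Ed0 in Ed1; rewrite Ed1.
Qed.

Lemma sum_u_three_exists (w : V) (hw : in_Q V add F w) a b d :
  F a -> F b -> F d -> exists e, sum_u V add F w [a; b; d] e.
Proof.
  intros Fa Fb Fd.
  destruct (hw b d Fb Fd) as [d1 [Fd1 Ed1]].
  destruct (hw a d1 Fa Fd1) as [e [Fe Ee]].
  exists e, d1; split; [|split; assumption].
  exists d; split; [split; auto | split; assumption].
Qed.

Lemma plus_u_iff_sum_opp_zero (w : V) (hw : in_Q V add F w) (hw0 : w <> zero)
  a b c : F a -> F b -> F c ->
  plus_u V add F w a b c <->
  sum_u_is_zero V add zero F w [a; b; fun x => opp (c x)].
Proof.
  intros Fa Fb Fc.
  pose proof (F_opp_comp w hw0 c Fc) as Fc'.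
  split.
  - intros [_ Eabc].
    destruct (sum_u_three_exists w hw a b _ Fa Fb Fc') as [e Se].
    exists e; split; [exact Se|].
    destruct (sum_u_three_eval w _ _ _ _ Se) as [Fe Ee].
    apply (F_zero_map_of_root w hw0 e Fe).
    now rewrite <- Ee, addA, Eabc, addrN.
  - intros [e [Se Ze]].
    destruct (sum_u_three_eval w _ _ _ _ Se) as [_ Ee].
    split; [exact Fc|].
    apply subr0_eq.
    now rewrite <- addA, Ee, Ze.
Qed.

End NearVectorSpaceSums.

Theorem mainTheorem7
  (V : Type) (add : V -> V -> V) (zero : V) (opp : V -> V)
  (F : (V -> V) -> Prop)
  (hNVS : is_near_vector_space V add zero opp F)
  (hcomm : F_commutative V F)
  (u v : V)
  (hu : in_Q V add F u) (hu0 : u <> zero)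
  (hv : in_Q V add F v) (hv0 : v <> zero)
  (hsums : forall l : list (V -> V), l <> [] -> (forall a, In a l -> F a) ->
     (sum_u_is_zero V add zero F u l <-> sum_u_is_zero V add zero F v l)) :
  forall a b c, F a -> F b -> F c ->
    (plus_u V add F u a b c <-> plus_u V add F v a b c).
Proof.
  destruct hNVS as [hF _].
  intros a b c Fa Fb Fc.
  rewrite (plus_u_iff_sum_opp_zero V add zero opp F hF u hu hu0 a b c Fa Fb Fc),
          (plus_u_iff_sum_opp_zero V add zero opp F hF v hv hv0 a b c Fa Fb Fc).
  apply hsums; [discriminate|].
  intros x [<- | [<- | [<- | []]]]; auto.
  exact (F_opp_comp V add zero opp F hF u hu0 c Fc).
Qed.
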